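(* Let $(\mathfrak{X},\pi)$, $a$, $s$, $S$, $m$ be as in the context. Let $z\in\mathbb{H}$, $\Phi>0$, and let $\Gamma_\Phi:(0,\infty)\to(0,\infty)$ be the strictly increasing function \[ \Gamma_\Phi(\tau):=\inf_{x\in\mathfrak{X}}\int_{\mathfrak{X}}\frac{\pi(\mathrm{d}y)}{\big(\tau^{-1}+|a_x-a_y|+\|S_x-S_y\|_2\,\Phi\big)^2}. \] If $\|m(z)\|_2\le\Phi$ and $\lim_{\tau\to\infty}\Gamma_\Phi(\tau)>\Phi^2$, then \[ \|m(z)\|\le(\Gamma_\Phi)^{-1}(\Phi^2). \]
   Context: Let $(\mathfrak{X},\pi)$ be a measure space where $\pi$ is a probability measure; $\mathcal{B}(\mathfrak{X},\mathbb{D})$ denotes bounded measurable $\mathbb{D}$-valued functions with sup norm $\|w\|=\sup_x|w_x|$; $\|\cdot\|_2$ is the norm of $L^2(\mathfrak{X},\pi)$. Let $a\in\mathcal{B}(\mathfrak{X},\mathbb{R})$, $s\in\mathcal{B}(\mathfrak{X}^2,[0,\infty))$ symmetric, $(Sw)_x=\int s_{xy}w_y\,\pi(\mathrm{d}y)$, $S_x:=(y\mapsto s_{xy})$. $m:\mathbb{H}\to\mathcal{B}(\mathfrak{X},\mathbb{H})$ is the unique solution of $-1/m(z)=z+a+Sm(z)$, $z\in\mathbb{H}$ (upper half-plane). *)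

From HB Require Import structures.
From mathcomp Require Import all_boot all_order all_algebra.
From mathcomp Require Import all_classical all_reals all_analysis.
From mathcomp Require Import complex.
Set Implicit Arguments. Unset Strict Implicit. Unset Printing Implicit Defensive.
Import Order.TTheory GRing.Theory Num.Theory.
Import numFieldNormedType.Exports.
Local Open Scope classical_set_scope.
Local Open Scope ring_scope.

Definition cabs (R : rcfType) (w : R[i]) : R := Normc.normc w.

Definition cRe (R : Type) (w : R[i]) : R := let: Complex u _ := w in u.
Definition cIm (R : Type) (w : R[i]) : R := let: Complex _ v := w in v.

Definition supnorm (R : realType) (T : Type) (w : T -> R[i]) : R :=
  sup (range (fun x => cabs (w x))).

Section Defs.
Context (d : measure_display) (T : measurableType d) (R : realType)
        (P : probability T R).

Definition L2normR (f : T -> R) : R :=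
  Num.sqrt (Rintegral P setT (fun y => f y ^+ 2)).

Definition L2normC (f : T -> R[i]) : R :=
  Num.sqrt (Rintegral P setT (fun y => cabs (f y) ^+ 2)).

Definition Sop (s : T -> T -> R) (w : T -> R[i]) (x : T) : R[i] :=
  Complex (Rintegral P setT (fun y => s x y * cRe (w y)))
          (Rintegral P setT (fun y => s x y * cIm (w y))).

Definition GammaPhi (a : T -> R) (s : T -> T -> R) (Phi tau : R) : \bar R :=
  ereal_inf (range (fun x =>
    (\int[P]_(y in setT)
       ((tau^-1 + `|a x - a y| + L2normR (fun y' => s x y' - s y y') * Phi)
          ^+ 2)^-1 %:E)%E)).

End Defs.

From HB Require Import structures.
From mathcomp Require Import all_boot all_order all_algebra.
From mathcomp Require Import all_classical all_reals all_analysis.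
From mathcomp Require Import complex.
From mathcomp Require Import ring lra measurable_realfun.
Import Order.TTheory GRing.Theory Num.Theory.
Import numFieldNormedType.Exports.
Local Open Scope classical_set_scope.
Local Open Scope ring_scope.

(* Subtracting the self-consistent equation at x and y, and bounding the
   difference of the S-terms by Cauchy-Schwarz, gives
     1/|m_y| <= 1/|m_x| + |a_x - a_y| + ||S_x - S_y||_2 Phi,
   so integrating |m_y|^2 >= (1/|m_x| + ...)^-2 in y yields
   Gamma_Phi(|m_x|) <= ||m||_2^2 <= Phi^2.  For t' <= t and C a bound of the
   distances, (t'/t)^2 Gamma(t) <= Gamma(t') <= ((1/t + C)/(1/t' + C))^2 Gamma(t),
   so Gamma is continuous and strictly increasing.  As Gamma(Phi) <= Phi^2 <
   lim Gamma, the intermediate value theorem gives tau with Gamma(tau) = Phi^2,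
   and strict monotonicity turns Gamma(|m_x|) <= Gamma(tau) into |m_x| <= tau. *)

Lemma quadratic_ge0_discr (R : realFieldType) (A B C : R) :
  (forall t, 0 <= A + 2 * t * C + t ^+ 2 * B) -> 0 <= B -> C ^+ 2 <= A * B.
Proof.
move=> q_ge0 B_ge0; have [B0|B_neq0] := eqVneq B 0; first subst B.
  have [->|C_neq0] := eqVneq C 0; first by rewrite expr0n mulr0.
  have := q_ge0 (- (A + 1) / (2 * C)).
  have -> : A + 2 * (- (A + 1) / (2 * C)) * C + (- (A + 1) / (2 * C)) ^+ 2 * 0
      = -1 by rewrite mulr0 addr0; field; rewrite C_neq0.
  by rewrite lerNr oppr0 ler10.
have := mulr_ge0 B_ge0 (q_ge0 (- C / B)).
have -> : B * (A + 2 * (- C / B) * C + (- C / B) ^+ 2 * B) = A * B - C ^+ 2.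
  by field.
by rewrite subr_ge0.
Qed.

Section BoundedMeasurable.
Context {d : measure_display} {T : measurableType d} {R : realType}.
Implicit Types f g : T -> R.

Definition bounded_measurable f :=
  measurable_fun setT f /\ exists M, forall x, `|f x| <= M.

Lemma bounded_measurable_cst k : bounded_measurable (fun _ => k).
Proof. by split; [exact: measurable_cst | exists `|k|]. Qed.

Lemma bounded_measurableD {f g} : bounded_measurable f -> bounded_measurable g ->
  bounded_measurable (fun x => f x + g x).
Proof.
move=> [mf [M fM]] [mg [N gN]]; split; first exact: measurable_funD.
by exists (M + N) => x; rewrite (le_trans (ler_normD _ _)) ?lerD.
Qed.

Lemma bounded_measurableB {f g} : bounded_measurable f -> bounded_measurable g ->
  bounded_measurable (fun x => f x - g x).
Proof.
move=> [mf [M fM]] [mg [N gN]]; split; first exact: measurable_funB.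
by exists (M + N) => x; rewrite (le_trans (ler_normB _ _)) ?lerD.
Qed.

Lemma bounded_measurableM {f g} : bounded_measurable f -> bounded_measurable g ->
  bounded_measurable (fun x => f x * g x).
Proof.
move=> [mf [M fM]] [mg [N gN]]; split; first exact: measurable_funM.
by exists (M * N) => x; rewrite normrM ler_pM.
Qed.

Lemma bounded_measurableX {f} : bounded_measurable f ->
  bounded_measurable (fun x => f x ^+ 2).
Proof.
by move=> bf; under eq_fun do rewrite expr2; exact: bounded_measurableM.
Qed.

Variable P : probability T R.

Lemma probability_inhabited : inhabited T.
Proof.
have [//|T0] := pselect (inhabited T).
have T_empty : [set: T] = set0.
  by apply/seteqP; split => // x _; exact: T0 (inhabits x).
have := probability_setT P; rewrite T_empty measure0 => -[] /eqP.
by rewrite eq_sym oner_eq0.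
Qed.

Lemma integral_cst_probability k : (\int[P]_(y in setT) k%:E = k%:E)%E.
Proof.
by rewrite integral_cst //= probability_setT mule1.
Qed.

Lemma ge0_le_integral_fin f g : measurable_fun setT f -> measurable_fun setT g ->
  (forall y, 0 <= f y) -> (forall y, f y <= g y) ->
  (\int[P]_(y in setT) (f y)%:E <= \int[P]_(y in setT) (g y)%:E)%E.
Proof.
move=> mf mg f_ge0 fg; apply: ge0_le_integral => //.
- by move=> y _; rewrite lee_fin.
- exact/measurable_EFinP.
- exact/measurable_EFinP.
- by move=> y _; rewrite lee_fin.
Qed.

Lemma ge0_integralZl_fin k f : 0 <= k -> measurable_fun setT f ->
  (forall y, 0 <= f y) ->
  (\int[P]_(y in setT) (k * f y)%:E = k%:E * \int[P]_(y in setT) (f y)%:E)%E.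
Proof.
move=> k_ge0 mf f_ge0; under eq_integral do rewrite EFinM.
apply: ge0_integralZl_EFin => //; last exact/measurable_EFinP.
by move=> y _; rewrite lee_fin.
Qed.

Lemma bounded_measurable_integrable {f} :
  bounded_measurable f -> P.-integrable setT (EFin \o f).
Proof.
move=> [mf [M fM]]; apply: measurable_bounded_integrable => //.
  by have /= -> := probability_setT P; exact: ltry.
rewrite /bounded_near; near=> M' => x _ /=; apply: le_trans (fM x) _.
by near: M'; apply: nbhs_pinfty_ge; exact: num_real.
Unshelve. all: by end_near. Qed.

Lemma Rintegral_boundedD {f g} : bounded_measurable f -> bounded_measurable g ->
  Rintegral P setT (fun x => f x + g x) =
  Rintegral P setT f + Rintegral P setT g.
Proof.
by move=> bf bg; apply: RintegralD => //; exact: bounded_measurable_integrable.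
Qed.

Lemma Rintegral_boundedB {f g} : bounded_measurable f -> bounded_measurable g ->
  Rintegral P setT (fun x => f x - g x) =
  Rintegral P setT f - Rintegral P setT g.
Proof.
by move=> bf bg; apply: RintegralB => //; exact: bounded_measurable_integrable.
Qed.

Lemma Rintegral_boundedZl k {f} : bounded_measurable f ->
  Rintegral P setT (fun x => k * f x) = k * Rintegral P setT f.
Proof.
by move=> bf; apply: RintegralZl => //; exact: bounded_measurable_integrable.
Qed.

Lemma le_Rintegral_bounded {f g} : bounded_measurable f -> bounded_measurable g ->
  (forall x, f x <= g x) -> Rintegral P setT f <= Rintegral P setT g.
Proof.
move=> bf bg fg.
by apply: le_Rintegral => //; exact: bounded_measurable_integrable.
Qed.

Lemma Rintegral_cauchy_schwarz {f g} :
  bounded_measurable f -> bounded_measurable g ->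
  Rintegral P setT (fun x => f x * g x) ^+ 2 <=
  Rintegral P setT (fun x => f x ^+ 2) * Rintegral P setT (fun x => g x ^+ 2).
Proof.
move=> bf bg; apply: quadratic_ge0_discr => [t|]; last first.
  by apply: Rintegral_ge0 => x _; exact: sqr_ge0.
have := @Rintegral_ge0 _ _ _ P setT (fun x => (f x + t * g x) ^+ 2)
  (fun x _ => sqr_ge0 _).
have -> : (fun x => (f x + t * g x) ^+ 2) = (fun x => f x ^+ 2 +
    ((2 * t) * (f x * g x) + t ^+ 2 * g x ^+ 2)).
  by apply: funext => x; ring.
rewrite !Rintegral_boundedD ?Rintegral_boundedZl ?addrA //;
  by do ?[apply: bounded_measurableD | apply: bounded_measurableM |
          exact: bounded_measurable_cst | exact: bounded_measurableX].
Qed.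


Lemma Rintegral_cauchy_schwarz2 (f u v : T -> R) :
  bounded_measurable f -> bounded_measurable u -> bounded_measurable v ->
  Rintegral P setT (fun y => f y * u y) ^+ 2 +
    Rintegral P setT (fun y => f y * v y) ^+ 2 <=
  Rintegral P setT (fun y => f y ^+ 2) *
    Rintegral P setT (fun y => u y ^+ 2 + v y ^+ 2).
Proof.
move=> bf bu bv.
set A := Rintegral P setT (fun y => f y * u y).
set B := Rintegral P setT (fun y => f y * v y).
set F := Rintegral P setT (fun y => f y ^+ 2).
set M := Rintegral P setT (fun y => u y ^+ 2 + v y ^+ 2).
set K := A ^+ 2 + B ^+ 2.
pose h y := A * u y + B * v y.
have bh : bounded_measurable h.
  by apply: bounded_measurableD; apply: bounded_measurableM => //;
    exact: bounded_measurable_cst.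
have bfu := bounded_measurableM bf bu; have bfv := bounded_measurableM bf bv.
have int_fh : Rintegral P setT (fun y => f y * h y) = K.
  have -> : (fun y => f y * h y) = (fun y => A * (f y * u y) + B * (f y * v y)).
    by apply: funext => y; rewrite /h; ring.
  rewrite Rintegral_boundedD ?Rintegral_boundedZl -?expr2 //;
    by apply: bounded_measurableM => //; exact: bounded_measurable_cst.
have int_h2 : Rintegral P setT (fun y => h y ^+ 2) <= K * M.
  have buv : bounded_measurable (fun y => u y ^+ 2 + v y ^+ 2).
    by apply: bounded_measurableD; exact: bounded_measurableX.
  rewrite -Rintegral_boundedZl //; apply: le_Rintegral_bounded => [||y].
  - exact: bounded_measurableX.
  - by apply: bounded_measurableM => //; exact: bounded_measurable_cst.
  rewrite -subr_ge0 /h.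
  have -> : K * (u y ^+ 2 + v y ^+ 2) - (A * u y + B * v y) ^+ 2 =
      (A * v y - B * u y) ^+ 2 by rewrite /K; ring.
  exact: sqr_ge0.
have F_ge0 : 0 <= F by apply: Rintegral_ge0 => y _; exact: sqr_ge0.
have K_ge0 : 0 <= K by rewrite addr_ge0 // sqr_ge0.
have KK : K * K <= K * (F * M).
  rewrite -expr2 -{1}int_fh (le_trans (Rintegral_cauchy_schwarz bf bh)) //.
  by rewrite mulrCA ler_wpM2l.
have [->|K_neq0] := eqVneq K 0.
  by rewrite mulr_ge0 // Rintegral_ge0 // => y _; rewrite addr_ge0 ?sqr_ge0.
by rewrite -(ler_pM2l (_ : 0 < K)) // lt_def K_neq0.
Qed.

End BoundedMeasurable.

Section ComplexModulus.
Context {R : rcfType}.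
Implicit Types (u v w : R[i]).

Lemma cabs_sqr w : cabs w ^+ 2 = cRe w ^+ 2 + cIm w ^+ 2.
Proof. by case: w => a b; rewrite /cabs /= sqr_sqrtr // addr_ge0 // sqr_ge0. Qed.

Lemma cabsD u v : cabs (u + v) <= cabs u + cabs v.
Proof. by have /andP[] := lec_normD u v. Qed.

Lemma cabsV w : cabs w^-1 = (cabs w)^-1.
Proof. exact: Normc.normcV. Qed.

Lemma cabs_real (r : R) : cabs (Complex r 0) = `|r|.
Proof. by rewrite /cabs /= expr0n /= addr0 sqrtr_sqr. Qed.

Lemma cabs_Re w : `|cRe w| <= cabs w.
Proof.
case: w => a b; rewrite /cabs /= -sqrtr_sqr ler_sqrt ?lerDl ?sqr_ge0 //.
by rewrite addr_ge0 // sqr_ge0.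
Qed.

Lemma cabs_Im w : `|cIm w| <= cabs w.
Proof.
case: w => a b; rewrite /cabs /= -sqrtr_sqr ler_sqrt ?lerDr ?sqr_ge0 //.
by rewrite addr_ge0 // sqr_ge0.
Qed.

End ComplexModulus.

Section SelfConsistentEquation.
Context {d : measure_display} {T : measurableType d} {R : realType}
  (P : probability T R).
Variables (s : T -> T -> R) (w : T -> R[i]).
Hypotheses (s_bm : forall x, bounded_measurable (s x))
  (bRe : bounded_measurable (fun y => cRe (w y)))
  (bIm : bounded_measurable (fun y => cIm (w y))).

Lemma cabs_SopB x y :
  cabs (Sop P s w x - Sop P s w y) <=
  L2normR P (fun y' => s x y' - s y y') * L2normC P w.
Proof.
have int_sB (m : T -> R) : bounded_measurable m ->
    Rintegral P setT (fun y' => s x y' * m y') -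
    Rintegral P setT (fun y' => s y y' * m y') =
    Rintegral P setT (fun y' => (s x y' - s y y') * m y').
  move=> m_bm; rewrite -Rintegral_boundedB; try exact: bounded_measurableM.
  by congr Rintegral; apply: funext => y'; ring.
have -> : Sop P s w x - Sop P s w y = Complex
    (Rintegral P setT (fun y' => (s x y' - s y y') * cRe (w y')))
    (Rintegral P setT (fun y' => (s x y' - s y y') * cIm (w y'))).
  by rewrite -!int_sB.
rewrite /cabs /= /L2normR /L2normC -sqrtrM; last first.
  by apply: Rintegral_ge0 => y' _; exact: sqr_ge0.
rewrite ler_sqrt; last first.
  by apply: mulr_ge0; apply: Rintegral_ge0 => y' _; exact: sqr_ge0.
under [X in _ <= _ * X]eq_Rintegral do rewrite cabs_sqr.
by apply: Rintegral_cauchy_schwarz2 => //; exact: bounded_measurableB.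
Qed.

Variables (a : T -> R) (z : R[i]).
Hypothesis w_eq : forall x, - (w x)^-1 = z + Complex (a x) 0 + Sop P s w x.

Lemma inv_cabs_le x y (Phi : R) : L2normC P w <= Phi ->
  (cabs (w y))^-1 <= (cabs (w x))^-1 +
     (`|a x - a y| + L2normR P (fun y' => s x y' - s y y') * Phi).
Proof.
move=> w_L2.
have a_xy : Complex (a x - a y) 0 = Complex (a x) 0 - Complex (a y) 0 :> R[i].
  by rewrite /GRing.add /GRing.opp /=; congr Complex; rewrite oppr0 addr0.
rewrite -!cabsV.
have -> : (w y)^-1 =
    (w x)^-1 + (Complex (a x - a y) 0 + (Sop P s w x - Sop P s w y)).
  by rewrite a_xy -[(w y)^-1]opprK w_eq -[(w x)^-1]opprK w_eq; ring.
rewrite (le_trans (cabsD _ _)) // lerD2l.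
rewrite (le_trans (cabsD _ _)) // cabs_real lerD2l.
rewrite (le_trans (cabs_SopB x y)) // ler_wpM2l //; exact: sqrtr_ge0.
Qed.

End SelfConsistentEquation.

Section Weight.
Context {R : realFieldType}.
Implicit Types (t c C : R).

Definition weight t c := (t^-1 + c) ^- 2.

Lemma weight_ge0 t c : 0 <= weight t c.
Proof. by rewrite invr_ge0 sqr_ge0. Qed.

Lemma weight_gt0 t c : 0 < t -> 0 <= c -> 0 < weight t c.
Proof. by move=> t0 c0; rewrite invr_gt0 exprn_gt0 // ltr_wpDr // invr_gt0. Qed.

Lemma weight_le_sqr t c u : 0 < u -> u^-1 <= t^-1 + c -> weight t c <= u ^+ 2.
Proof.
move=> u0 le_u; have v0 : 0 < u^-1 by rewrite invr_gt0.
have w0 := lt_le_trans v0 le_u.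
rewrite -[u in _ <= u ^+ 2]invrK exprVn lef_pV2 ?posrE ?exprn_gt0 //.
by rewrite ler_sqr ?nnegrE ?(ltW v0) ?(ltW w0).
Qed.

Lemma weight_nonincreasing t c C : 0 < t -> 0 <= c -> c <= C ->
  weight t C <= weight t c.
Proof.
move=> t0 c0 cC; have u0 : 0 < t^-1 by rewrite invr_gt0.
have C0 := le_trans c0 cC.
rewrite lef_pV2 ?posrE ?exprn_gt0 ?ltr_wpDr //.
by rewrite ler_sqr ?nnegrE ?lerD2l ?addr_ge0 // ltW.
Qed.

Lemma weight_scale t (t' : R) c : 0 < t' -> t' <= t -> 0 <= c ->
  (t' / t) ^+ 2 * weight t c <= weight t' c.
Proof.
move=> t'0 t't c0; have t0 := lt_le_trans t'0 t't.
have u0 : 0 < t^-1 by rewrite invr_gt0.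
have u'0 : 0 < t'^-1 by rewrite invr_gt0.
rewrite /weight -!exprVn -exprMn ler_sqr ?nnegrE ?mulr_ge0 ?invr_ge0 ?addr_ge0
  ?(ltW t0) ?(ltW t'0) ?(ltW u0) ?(ltW u'0) //.
have tt'_ge1 : 1 <= t / t' by rewrite ler_pdivlMr // mul1r.
have tt'c_ge0 : 0 <= t / t' * c by rewrite mulr_ge0 // (le_trans ler01).
have -> : t' / t / (t^-1 + c) = (t'^-1 + t / t' * c)^-1.
  have tc_ge0 : 0 <= t * c by rewrite mulr_ge0 // ltW.
  by field; rewrite !gt_eqF //; lra.
by rewrite lef_pV2 ?posrE ?ltr_wpDr // lerD2l ler_peMl.
Qed.

Lemma weight_scale_inv t (t' : R) c C : 0 < t' -> t' <= t -> 0 <= c -> c <= C ->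
  weight t' c <= ((t^-1 + C) / (t'^-1 + C)) ^+ 2 * weight t c.
Proof.
move=> t'0 t't c0 cC; have t0 := lt_le_trans t'0 t't.
have C0 := le_trans c0 cC.
have u0 : 0 < t^-1 by rewrite invr_gt0.
have u'0 : 0 < t'^-1 by rewrite invr_gt0.
have tt' : t^-1 <= t'^-1 by rewrite lef_pV2.
rewrite /weight -!exprVn -exprMn ler_sqr ?nnegrE ?mulr_ge0 ?invr_ge0 ?addr_ge0
  ?(ltW u0) ?(ltW u'0) //.
have -> : (t^-1 + C) / (t'^-1 + C) * (t^-1 + c)^-1 =
    ((t'^-1 + C) * (t^-1 + c) / (t^-1 + C))^-1.
  by rewrite invf_div invfM mulrA.
rewrite lef_pV2 ?posrE ?divr_gt0 ?mulr_gt0 ?ltr_wpDr //.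
rewrite ler_pdivrMr ?ltr_wpDr // -subr_ge0.
have -> : (t'^-1 + c) * (t^-1 + C) - (t'^-1 + C) * (t^-1 + c) =
  (t'^-1 - t^-1) * (C - c) by ring.
by rewrite mulr_ge0 // subr_ge0.
Qed.

End Weight.

Lemma continuous_of_quadratic_scaling (R : realType) (g : R -> R) (t : R) :
  0 < t ->
  (forall x y, 0 < x -> x <= y -> g x <= g y) ->
  (forall x y, 0 < x -> x <= y -> (x / y) ^+ 2 * g y <= g x) ->
  g x @[x --> t] --> g t.
Proof.
move=> t0 g_le g_scale.
have g_dist x : 0 < x -> `|g t - g x| <= `|1 - (x / t) ^+ 2| * `|g t|.
  move=> x0; rewrite -normrM.
  have [xt|/ltW tx] := leP x t.
    apply: le_trans (ler_norm _); rewrite ger0_norm ?subr_ge0 ?g_le //.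
    by have := g_scale x t x0 xt; rewrite mulrBl mul1r; lra.
  rewrite -[leRHS]normrN; apply: le_trans (ler_norm _).
  rewrite distrC ger0_norm ?subr_ge0 ?g_le //.
  have gx : g x = (x / t) ^+ 2 * ((t / x) ^+ 2 * g x).
    by rewrite mulrA -exprMn mulrA divfK ?gt_eqF // divff ?gt_eqF // expr1n mul1r.
  have := ler_wpM2l (sqr_ge0 (x / t)) (g_scale t x t0 tx); rewrite -gx.
  by rewrite mulrBl mul1r; lra.
have sqr_cvg : (x / t) ^+ 2 @[x --> t] --> (1 : R).
  suff : (x / t) ^+ 2 @[x --> t] --> (t / t) ^+ 2.
    by rewrite divff ?gt_eqF // expr1n.
  apply: (@cvg_comp _ _ _ (fun x => x / t) (fun y => y ^+ 2)).
    by apply: cvgMl; exact: cvg_id.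
  exact: exprn_continuous.
apply/cvgrPdist_le => e e0.
have e'0 : 0 < e / (`|g t| + 1) by rewrite divr_gt0 // ltr_wpDl.
near=> x.
apply: le_trans (g_dist x _) _; first by near: x; exact: lt_nbhsr.
have : `|1 - (x / t) ^+ 2| <= e / (`|g t| + 1).
  by near: x; move/cvgrPdist_le : sqr_cvg; apply.
rewrite ler_pdivlMr ?ltr_wpDl // => /(le_trans _); apply.
by rewrite ler_wpM2l // lerDl.
Unshelve. all: by end_near. Qed.

Section GammaPhiProperties.
Context {d : measure_display} {T : measurableType d} {R : realType}
  (P : probability T R).
Variables (a : T -> R) (s : T -> T -> R) (Phi : R).
Hypotheses (ma : measurable_fun setT a) (ba : exists M, forall x, `|a x| <= M)
  (ms : measurable_fun setT (fun p : T * T => s p.1 p.2))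
  (bs : exists M, forall x y, s x y <= M) (s_ge0 : forall x y, 0 <= s x y)
  (Phi_gt0 : 0 < Phi).

Definition pdist x y :=
  `|a x - a y| + L2normR P (fun y' => s x y' - s y y') * Phi.

Definition gamma_at x t := (\int[P]_(y in setT) (weight t (pdist x y))%:E)%E.

Lemma GammaPhiE t : GammaPhi P a s Phi t = ereal_inf (range (gamma_at ^~ t)).
Proof.
rewrite /GammaPhi /gamma_at; do 2 f_equal; apply: funext => x.
by apply: eq_integral => y _; rewrite /weight /pdist addrA.
Qed.

Lemma GammaPhi_le_gamma_at x t : (GammaPhi P a s Phi t <= gamma_at x t)%E.
Proof. by rewrite GammaPhiE; apply: ereal_inf_lbound; exists x. Qed.

Lemma bounded_measurable_kernel x : bounded_measurable (s x).
Proof.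
split; first exact: measurableT_comp ms (pair1_measurable x).
by case: bs => M sM; exists M => y; rewrite ger0_norm ?s_ge0.
Qed.

Lemma pdist_ge0 x y : 0 <= pdist x y.
Proof. by rewrite addr_ge0 // mulr_ge0 ?sqrtr_ge0 // ltW. Qed.

Lemma pdist_bounded : exists C, forall x y, pdist x y <= C.
Proof.
case: ba => Ma aM; case: bs => Ms sM.
exists (`|Ma| + `|Ma| + `|Ms| * Phi) => x y; apply: lerD.
  apply: le_trans (ler_normB _ _) _.
  by apply: lerD; apply: le_trans (ler_norm _); [exact: aM x | exact: aM y].
apply: ler_wpM2r; first exact: ltW.
rewrite /L2normR -sqrtr_sqr ler_sqrt ?sqr_ge0 //.
have -> : Ms ^+ 2 = Rintegral P setT (fun _ => Ms ^+ 2).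
  by rewrite /Rintegral integral_cst_probability.
apply: le_Rintegral_bounded => [||y'].
- by apply: bounded_measurableX; apply: bounded_measurableB;
    exact: bounded_measurable_kernel.
- exact: bounded_measurable_cst.
rewrite -subr_ge0.
have -> : Ms ^+ 2 - (s x y' - s y y') ^+ 2 =
  (Ms - s x y' + s y y') * (Ms + s x y' - s y y') by ring.
have := sM x y'; have := sM y y'; have := s_ge0 x y'; have := s_ge0 y y'.
by move=> *; apply: mulr_ge0; lra.
Qed.

Lemma measurable_pdist x : measurable_fun setT (pdist x).
Proof.
apply: measurable_funD.
  apply: measurableT_comp; first exact: normr_measurable.
  by apply: measurable_funB => //; exact: measurable_cst.
apply: measurable_funM; last exact: measurable_cst.
apply: measurableT_comp.
  exact: continuous_measurable_fun (@sqrt_continuous R).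
(* y |-> ||S_x - S_y||_2^2 is measurable by Tonelli *)
pose F (p : T * T) := ((s x p.2 - s p.1 p.2) ^+ 2)%:E.
have mF : measurable_fun setT F.
  apply/measurable_EFinP; apply: measurable_funX; apply: measurable_funB => //.
  exact: measurableT_comp (bounded_measurable_kernel x).1 measurable_snd.
have F_ge0 p : (0 <= F p)%E by rewrite lee_fin sqr_ge0.
exact: measurableT_comp (fine_measurable measurableT)
  (measurable_fun_fubini_tonelli_F F mF F_ge0).
Qed.

(* [weight t] is antitone only on nonnegative arguments; clamping with [max]
   makes it antitone, hence measurable, on all of R. *)
Lemma measurable_weight_pdist x t : 0 < t ->
  measurable_fun setT (fun y => weight t (pdist x y)).
Proof.
move=> t0; have max_ge0 (v : R) : 0 <= Num.max v 0 by rewrite le_max lexx orbT.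
have -> : (fun y => weight t (pdist x y)) =
    (fun v : R => weight t (Num.max v 0)) \o pdist x.
  by apply: funext => y /=; rewrite max_l // pdist_ge0.
apply: measurableT_comp (measurable_pdist x).
apply: nonincreasing_measurable => // v w vw.
by apply: weight_nonincreasing => //; exact: le_max2.
Qed.

Section BoundedDistance.
Variable C : R.
Hypothesis pdist_le : forall x y, pdist x y <= C.

Lemma bound_ge0 : 0 <= C.
Proof.
by case: (probability_inhabited P) => x; exact: le_trans (pdist_ge0 x x) _.
Qed.

Lemma gamma_at_ge x {t} : 0 < t -> ((weight t C)%:E <= gamma_at x t)%E.
Proof.
move=> t0; rewrite -(integral_cst_probability P).
apply: ge0_le_integral_fin => [||y|y].
- exact: measurable_cst.
- exact: measurable_weight_pdist.
- exact: weight_ge0.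
- by rewrite weight_nonincreasing ?pdist_ge0.
Qed.

Lemma gamma_at_le_sqr x {t} : 0 < t -> (gamma_at x t <= (t ^+ 2)%:E)%E.
Proof.
move=> t0; rewrite -(integral_cst_probability P).
apply: ge0_le_integral_fin => [||y|y].
- exact: measurable_weight_pdist.
- exact: measurable_cst.
- exact: weight_ge0.
- by rewrite weight_le_sqr // lerDl pdist_ge0.
Qed.

Lemma gamma_at_scale x {t t' : R} : 0 < t' -> t' <= t ->
  (((t' / t) ^+ 2)%:E * gamma_at x t <= gamma_at x t')%E.
Proof.
move=> t'0 t't; have t0 := lt_le_trans t'0 t't.
rewrite -ge0_integralZl_fin ?sqr_ge0 //;
  [|exact: measurable_weight_pdist|by move=> y; exact: weight_ge0].
apply: ge0_le_integral_fin => [||y|y].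
- by apply: measurable_funM;
    [exact: measurable_cst | exact: measurable_weight_pdist].
- exact: measurable_weight_pdist.
- by rewrite mulr_ge0 ?sqr_ge0 ?weight_ge0.
- by rewrite weight_scale ?pdist_ge0.
Qed.

Lemma gamma_at_scale_inv x {t t' : R} : 0 < t' -> t' <= t ->
  (gamma_at x t' <= (((t^-1 + C) / (t'^-1 + C)) ^+ 2)%:E * gamma_at x t)%E.
Proof.
move=> t'0 t't; have t0 := lt_le_trans t'0 t't.
rewrite -ge0_integralZl_fin ?sqr_ge0 //;
  [|exact: measurable_weight_pdist|by move=> y; exact: weight_ge0].
apply: ge0_le_integral_fin => [||y|y].
- exact: measurable_weight_pdist.
- by apply: measurable_funM;
    [exact: measurable_cst | exact: measurable_weight_pdist].
- exact: weight_ge0.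
- by rewrite weight_scale_inv ?pdist_ge0.
Qed.

Lemma gamma_at_fin x {t} : 0 < t -> gamma_at x t \is a fin_num.
Proof.
move=> t0; rewrite fin_numElt (lt_le_trans (ltNyr _) (gamma_at_ge x t0)).
by rewrite (le_lt_trans (gamma_at_le_sqr x t0) (ltry _)).
Qed.

Definition gamma t := fine (GammaPhi P a s Phi t).

Lemma GammaPhi_fin {t} : 0 < t ->
  [/\ GammaPhi P a s Phi t = (gamma t)%:E, weight t C <= gamma t
    & gamma t <= t ^+ 2].
Proof.
move=> t0.
have lb : ((weight t C)%:E <= GammaPhi P a s Phi t)%E.
  by rewrite GammaPhiE; apply: le_ereal_inf_tmp => _ [x _ <-]; exact: gamma_at_ge.
have ub : (GammaPhi P a s Phi t <= (t ^+ 2)%:E)%E.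
  case: (probability_inhabited P) => x.
  exact: le_trans (GammaPhi_le_gamma_at x t) (gamma_at_le_sqr x t0).
have GammaE : GammaPhi P a s Phi t = (gamma t)%:E.
  rewrite /gamma fineK // fin_numElt (lt_le_trans (ltNyr _) lb).
  by rewrite (le_lt_trans ub (ltry _)).
by split => //; rewrite -lee_fin -GammaE.
Qed.

Lemma gamma_gt0 {t} : 0 < t -> 0 < gamma t.
Proof.
move=> t0; have [_ le_gamma _] := GammaPhi_fin t0.
by rewrite (lt_le_trans _ le_gamma) // weight_gt0 // bound_ge0.
Qed.

Lemma gamma_scale {t t' : R} : 0 < t' -> t' <= t ->
  (t' / t) ^+ 2 * gamma t <= gamma t'.
Proof.
move=> t'0 t't; have t0 := lt_le_trans t'0 t't.
have [Gt _ _] := GammaPhi_fin t0; have [Gt' _ _] := GammaPhi_fin t'0.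
rewrite -lee_fin -Gt' GammaPhiE; apply: le_ereal_inf_tmp => _ [x _ <-].
apply: le_trans (gamma_at_scale x t'0 t't); rewrite EFinM -Gt.
by rewrite lee_pmul ?lee_fin ?sqr_ge0 ?GammaPhi_le_gamma_at // Gt lee_fin ltW
  ?gamma_gt0.
Qed.

Lemma gamma_scale_inv {t t' : R} : 0 < t' -> t' <= t ->
  gamma t' <= ((t^-1 + C) / (t'^-1 + C)) ^+ 2 * gamma t.
Proof.
move=> t'0 t't; have t0 := lt_le_trans t'0 t't.
set r := (t^-1 + C) / (t'^-1 + C).
have r0 : 0 < r ^+ 2.
  by rewrite exprn_gt0 // divr_gt0 // ltr_wpDr ?bound_ge0 // invr_gt0.
have [Gt _ _] := GammaPhi_fin t0; have [Gt' _ _] := GammaPhi_fin t'0.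
rewrite -ler_pdivrMl // -lee_fin -Gt GammaPhiE.
apply: le_ereal_inf_tmp => _ [x _ <-].
rewrite -(fineK (gamma_at_fin x t0)) lee_fin ler_pdivrMl // -lee_fin EFinM.
rewrite -Gt' fineK ?gamma_at_fin //.
exact: le_trans (GammaPhi_le_gamma_at x t') (gamma_at_scale_inv x t'0 t't).
Qed.

Lemma gamma_lt {t t' : R} : 0 < t' -> t' < t -> gamma t' < gamma t.
Proof.
move=> t'0 t't; have t0 := lt_trans t'0 t't.
apply: le_lt_trans (gamma_scale_inv t'0 (ltW t't)) _.
have u0 : 0 < t^-1 by rewrite invr_gt0.
have uu' : t^-1 < t'^-1 by rewrite ltf_pV2.
have D0 : 0 < t'^-1 + C by rewrite ltr_wpDr ?bound_ge0 // (lt_trans u0).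
have ratio_ge0 : 0 <= (t^-1 + C) / (t'^-1 + C).
  by rewrite divr_ge0 ?(ltW D0) ?addr_ge0 ?bound_ge0 ?(ltW u0).
have ratio_lt1 : (t^-1 + C) / (t'^-1 + C) < 1.
  by rewrite ltr_pdivrMr // mul1r ltrD2r.
by rewrite gtr_pMl ?gamma_gt0 // expr2 -[1]mulr1 ltr_pM.
Qed.

Lemma gamma_le {t t' : R} : 0 < t' -> t' <= t -> gamma t' <= gamma t.
Proof.
move=> t'0; rewrite le_eqVlt => /predU1P [-> //|t't].
exact: ltW (gamma_lt t'0 t't).
Qed.

Lemma gamma_continuous (t : R) : 0 < t -> gamma x @[x --> t] --> gamma t.
Proof.
move=> t0; apply: continuous_of_quadratic_scaling => // x y x0 xy.
- exact: gamma_le.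
- exact: gamma_scale.
Qed.

Lemma exists_gamma_gt :
  ((Phi ^+ 2)%:E < lim (GammaPhi P a s Phi tau @[tau --> +oo%R]))%E ->
  exists2 t, 0 < t & Phi ^+ 2 < gamma t.
Proof.
move=> Phi_lt_lim.
have max_gt0 (t : R) : 0 < Num.max t 1 by rewrite lt_max ltr01 orbT.
(* clamping the argument to [1, oo) makes [GammaPhi] monotone on all of R *)
pose G t := GammaPhi P a s Phi (Num.max t 1).
have G_nd : {homo G : n m / n <= m >-> (n <= m)%E}.
  move=> n m nm; rewrite /G; have [-> _ _] := GammaPhi_fin (max_gt0 n).
  have [-> _ _] := GammaPhi_fin (max_gt0 m).
  by rewrite lee_fin gamma_le // le_max2.
have G_cvg : GammaPhi P a s Phi tau @[tau --> +oo%R] --> ereal_sup (range G).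
  apply: cvg_trans (nondecreasing_cvge G_nd); apply: near_eq_cvg; near=> t.
  have t_ge1 : 1 <= t by near: t; apply: nbhs_pinfty_ge; exact: num_real.
  by rewrite /G max_l.
rewrite (cvg_lim (@ereal_hausdorff R) G_cvg) in Phi_lt_lim.
have [_ [t _ <-]] := ereal_sup_gt Phi_lt_lim.
rewrite /G; have [-> _ _] := GammaPhi_fin (max_gt0 t).
rewrite lte_fin => Phi_lt.
by exists (Num.max t 1).
Unshelve. all: by end_near. Qed.

Lemma exists_GammaPhi_eq :
  ((Phi ^+ 2)%:E < lim (GammaPhi P a s Phi tau @[tau --> +oo%R]))%E ->
  exists tau, 0 < tau /\ GammaPhi P a s Phi tau = (Phi ^+ 2)%:E.
Proof.
move=> /exists_gamma_gt[t1 t1_gt0 gamma_t1].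
have [_ _ gamma_Phi] := GammaPhi_fin Phi_gt0.
have Phi_t1 : Phi <= t1.
  rewrite leNgt; apply/negP => /ltW t1_Phi.
  have := lt_le_trans gamma_t1 (le_trans (gamma_le t1_gt0 t1_Phi) gamma_Phi).
  by rewrite ltxx.
have gamma_cont : {within `[Phi, t1], continuous gamma}.
  apply: continuous_in_subspaceT => x.
  rewrite inE /= in_itv /= => /andP[Phi_x _].
  exact: gamma_continuous (lt_le_trans Phi_gt0 Phi_x).
have [tau] : exists2 tau, tau \in `[Phi, t1] & gamma tau = Phi ^+ 2.
  by apply: IVT => //; rewrite ge_min le_max gamma_Phi (ltW gamma_t1) orbT.
rewrite in_itv /= => /andP[Phi_tau _] gamma_tau.
have tau_gt0 := lt_le_trans Phi_gt0 Phi_tau.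
have [Gtau _ _] := GammaPhi_fin tau_gt0.
by exists tau; rewrite Gtau gamma_tau.
Qed.

Section Solution.
Variables (w : T -> R[i]) (z : R[i]).
Hypotheses (bRe : bounded_measurable (fun x => cRe (w x)))
  (bIm : bounded_measurable (fun x => cIm (w x)))
  (Im_w_gt0 : forall x, 0 < cIm (w x))
  (w_eq : forall x, - (w x)^-1 = z + Complex (a x) 0 + Sop P s w x)
  (w_L2 : L2normC P w <= Phi).

Lemma cabs_gt0 x : 0 < cabs (w x).
Proof.
exact: lt_le_trans (Im_w_gt0 x) (le_trans (ler_norm _) (cabs_Im _)).
Qed.

Lemma gamma_at_cabs_le x : (gamma_at x (cabs (w x)) <= (Phi ^+ 2)%:E)%E.
Proof.
have bw2 : bounded_measurable (fun y => cabs (w y) ^+ 2).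
  under eq_fun do rewrite cabs_sqr.
  by apply: bounded_measurableD; exact: bounded_measurableX.
apply: le_trans (ge0_le_integral_fin P _ (fun y => cabs (w y) ^+ 2) _ _ _ _) _.
- exact/measurable_weight_pdist/cabs_gt0.
- exact: bw2.1.
- by move=> y; exact: weight_ge0.
- move=> y; rewrite weight_le_sqr ?cabs_gt0 //.
  exact: inv_cabs_le bounded_measurable_kernel bRe bIm _ _ w_eq _ _ _ w_L2.
have w2_int := bounded_measurable_integrable P bw2.
rewrite -(fineK (integrable_fin_num measurableT w2_int)).
have int_ge0 : 0 <= Rintegral P setT (fun y => cabs (w y) ^+ 2).
  by apply: Rintegral_ge0 => y _; exact: sqr_ge0.
by rewrite lee_fin -[fine _]/(Rintegral P setT _) -(sqr_sqrtr int_ge0)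
  ler_sqr ?nnegrE ?sqrtr_ge0 ?(ltW Phi_gt0).
Qed.

Lemma cabs_le_GammaPhi_inv tau : 0 < tau ->
  GammaPhi P a s Phi tau = (Phi ^+ 2)%:E -> forall x, cabs (w x) <= tau.
Proof.
move=> tau_gt0 Gtau x; rewrite leNgt; apply/negP => /(gamma_lt tau_gt0).
have [Gw _ _] := GammaPhi_fin (cabs_gt0 x).
have [Gtau' _ _] := GammaPhi_fin tau_gt0.
have : ((gamma (cabs (w x)))%:E <= (Phi ^+ 2)%:E)%E.
  by rewrite -Gw (le_trans (GammaPhi_le_gamma_at x _) (gamma_at_cabs_le x)).
by rewrite -Gtau Gtau' !lee_fin leNgt => /negP.
Qed.

End Solution.

End BoundedDistance.
End GammaPhiProperties.

Lemma supnorm_le (T : Type) (R : realType) (w : T -> R[i]) (M : R) :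
  inhabited T -> (forall x, cabs (w x) <= M) -> supnorm w <= M.
Proof.
move=> [x0] wM; apply: ge_sup; first by exists (cabs (w x0)), x0.
by move=> _ [x _ <-].
Qed.

Theorem mainTheorem6 (d : measure_display) (T : measurableType d) (R : realType)
  (P : probability T R)
  (a : T -> R) (s : T -> T -> R) (m : R[i] -> T -> R[i])
  (z : R[i]) (Phi : R) :
  (* a in B(X, R) *)
  measurable_fun setT a ->
  (exists M : R, forall x, `|a x| <= M) ->
  (* s in B(X^2, [0, oo)), symmetric *)
  measurable_fun setT (fun p : T * T => s p.1 p.2) ->
  (exists M : R, forall x y, s x y <= M) ->
  (forall x y, 0 <= s x y) ->
  (forall x y, s x y = s y x) ->
  (* m : H -> B(X, H) solves  -1/m(z) = z + a + S m(z)  for all z in H *)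
  (forall w : R[i], 0 < cIm w ->
     [/\ measurable_fun setT (fun x => cRe (m w x)),
         measurable_fun setT (fun x => cIm (m w x)),
         (exists M : R, forall x, cabs (m w x) <= M),
         (forall x, 0 < cIm (m w x)) &
         (forall x, - (m w x)^-1 = w + Complex (a x) 0 + Sop P s (m w) x)]) ->
  (* z in H, Phi > 0 *)
  0 < cIm z -> 0 < Phi ->
  (* ||m(z)||_2 <= Phi *)
  L2normC P (m z) <= Phi ->
  (* lim_{tau -> oo} Gamma_Phi(tau) > Phi^2 *)
  ((Phi ^+ 2)%:E < lim (GammaPhi P a s Phi tau @[tau --> +oo%R]))%E ->
  (* ||m(z)|| <= Gamma_Phi^{-1}(Phi^2) *)
  (exists tau : R, 0 < tau /\ GammaPhi P a s Phi tau = (Phi ^+ 2)%:E) /\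
  (forall tau : R, 0 < tau -> GammaPhi P a s Phi tau = (Phi ^+ 2)%:E ->
     supnorm (m z) <= tau).
Proof.
move=> ma ba ms bs s_ge0 _ m_sol z_H Phi_gt0 m_L2 Phi_lt_lim.
have [mRe mIm [M mM] Im_m_gt0 m_eq] := m_sol z z_H.
have bRe : bounded_measurable (fun x => cRe (m z x)).
  by split => //; exists M => x; exact: le_trans (cabs_Re _) (mM x).
have bIm : bounded_measurable (fun x => cIm (m z x)).
  by split => //; exists M => x; exact: le_trans (cabs_Im _) (mM x).
have [C pdist_le] := pdist_bounded P a s Phi ba ms bs s_ge0 Phi_gt0.
split.
  exact: (exists_GammaPhi_eq P a s Phi ma ms bs s_ge0 Phi_gt0 C pdist_le).
move=> tau tau_gt0 Gtau; apply: supnorm_le (probability_inhabited P) _.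
exact: cabs_le_GammaPhi_inv P a s Phi ma ms bs s_ge0 Phi_gt0 C pdist_le _ _
  bRe bIm Im_m_gt0 m_eq m_L2 _ tau_gt0 Gtau.
Qed.
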